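(* Let $S\subset\mathbb{R}^2$ be a set of at least $4$ points in general position and let $a,b,c\in S$ be distinct. If $ab$ is an exit edge of $S$ with witness $c$, then $ac$ is not an exit edge of $S$ with witness $b$, and $bc$ is not an exit edge of $S$ with witness $a$.
   Context: General position: no three points collinear. For distinct $a,b,c\in S$, the segment $ab$ is an exit edge of $S$ with witness $c$ if there is no $p\in S$ such that the line through $a$ and $p$ strictly separates $b$ from $c$, and there is no $p\in S$ such that the line through $b$ and $p$ strictly separates $a$ from $c$. *)

(* points of R^2 as pairs of reals; a finite point set as a
   duplicate-free list. *)
From Stdlib Require Import Reals List.
Open Scope R_scope.

Definition point := (R * R)%type.

(* Twice the signed area of triangle pqr: positive iff r lies strictly to
   the left of the directed line pq; zero iff p, q, r are collinear. *)
Definition orient (p q r : point) : R :=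
  (fst q - fst p) * (snd r - snd p) - (snd q - snd p) * (fst r - fst p).

Definition collinear (p q r : point) : Prop := orient p q r = 0.

Definition general_position (S : list point) : Prop :=
  forall p q r, In p S -> In q S -> In r S ->
    p <> q -> q <> r -> p <> r -> ~ collinear p q r.

Definition strictly_separates (a p x y : point) : Prop :=
  a <> p /\ orient a p x * orient a p y < 0.

Definition exit_edge (S : list point) (a b c : point) : Prop :=
  In a S /\ In b S /\ In c S /\ a <> b /\ b <> c /\ a <> c /\
  (~ exists p, In p S /\ strictly_separates a p b c) /\
  (~ exists p, In p S /\ strictly_separates b p a c).

From Stdlib Require Import Reals List Lra Lia Classical.
Open Scope R_scope.

(* Let d be a fourth point of S, distinct from a, b, c.  The
   three orientations  A = orient d b c,  B = orient a d c,  C = orient a b d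
   are nonzero by general position, so two of them share a sign; this is
   exactly the statement that one of the lines ad, bd, cd strictly separates
   the two remaining points of {a, b, c}.  If ab is an exit edge with witness
   c, the lines ad and bd cannot separate, hence the line cd separates a
   from b.  But an exit edge ac (witness b) or bc (witness a) forbids every
   line through c from separating a and b, a contradiction. *)

Lemma strictly_separates_sym (p q x y : point) :
  strictly_separates p q x y -> strictly_separates p q y x.
Proof. unfold strictly_separates; intros [Hpq Hs]; split; [exact Hpq | lra]. Qed.

Lemma two_of_three_same_sign (A B C : R) :
  A <> 0 -> B <> 0 -> C <> 0 ->
  0 < B * C \/ 0 < A * C \/ 0 < A * B.
Proof.
  intros HA HB HC.
  destruct (Rlt_or_le 0 A), (Rlt_or_le 0 B), (Rlt_or_le 0 C).
  all: first [ left; nra | right; left; nra | right; right; nra ].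
Qed.

Lemma some_line_through_separates (a b c d : point) :
  a <> d -> b <> d -> c <> d ->
  orient d b c <> 0 -> orient a d c <> 0 -> orient a b d <> 0 ->
  strictly_separates a d b c \/ strictly_separates b d a c \/
  strictly_separates c d a b.
Proof.
  intros Had Hbd Hcd HA HB HC; unfold strictly_separates.
  replace (orient a d b) with (- orient a b d) by (unfold orient; ring).
  replace (orient b d a) with (orient a b d) by (unfold orient; ring).
  replace (orient b d c) with (- orient d b c) by (unfold orient; ring).
  replace (orient c d a) with (- orient a d c) by (unfold orient; ring).
  replace (orient c d b) with (orient d b c) by (unfold orient; ring).
  destruct (two_of_three_same_sign _ _ _ HA HB HC) as [H | [H | H]].
  - left; split; [exact Had | nra].
  - right; left; split; [exact Hbd | nra].
  - right; right; split; [exact Hcd | nra].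
Qed.

Lemma exists_fourth_point (S : list point) (a b c : point) :
  NoDup S -> (4 <= length S)%nat ->
  exists d, In d S /\ d <> a /\ d <> b /\ d <> c.
Proof.
  intros HN HL.
  destruct (classic (exists d, In d S /\ ~ In d (a :: b :: c :: nil)))
    as [[d [Hd Hout]] | Hnone].
  - exists d; simpl in Hout; intuition.
  - exfalso.
    assert (Hincl : incl S (a :: b :: c :: nil)).
    { intros x Hx; apply NNPP; intro Hout; apply Hnone; eauto. }
    pose proof (NoDup_incl_length HN Hincl); simpl in *; lia.
Qed.

Lemma exit_edge_separation (S : list point) (a b c d : point) :
  general_position S -> exit_edge S a b c ->
  In d S -> d <> a -> d <> b -> d <> c ->
  strictly_separates c d a b.
Proof.
  intros HG [Ha [Hb [Hc [Hab [Hbc [Hac [Na Nb]]]]]]] Hd Hda Hdb Hdc.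
  destruct (some_line_through_separates a b c d) as [K | [K | K]]; auto.
  - apply (HG d b c); auto.
  - apply (HG a d c); auto.
  - apply (HG a b d); auto.
  - exfalso; apply Na; exists d; auto.
  - exfalso; apply Nb; exists d; auto.
Qed.

Theorem mainTheorem3 (S : list point) (a b c : point) :
  NoDup S -> (4 <= length S)%nat -> general_position S ->
  In a S -> In b S -> In c S -> a <> b -> b <> c -> a <> c ->
  exit_edge S a b c ->
  ~ exit_edge S a c b /\ ~ exit_edge S b c a.
Proof.
  intros HN HL HG _ _ _ _ _ _ HE.
  destruct (exists_fourth_point S a b c HN HL) as [d [Hd [Hda [Hdb Hdc]]]].
  pose proof (exit_edge_separation S a b c d HG HE Hd Hda Hdb Hdc) as Hsep.
  (* Both candidate edges end at c, whose lines must not separate a and b. *)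
  split; intros [_ [_ [_ [_ [_ [_ [_ Nc]]]]]]]; apply Nc; exists d.
  - auto.
  - auto using strictly_separates_sym.
Qed.
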